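(* Let $n\ge2$, $\alpha\in\mathbb{Z}_2^{n-1}$ and write $\alpha0=(\alpha_0,\dots,\alpha_{n-2},0)\in\mathbb{Z}_2^n$. Then $$\max_{\beta,\gamma\in\mathbb{Z}_2^n}\mathrm{adp}^{\mathrm{XR}}_{n-1}(\alpha0,\beta\to\gamma)=\mathrm{adp}^{\oplus}(\alpha0,\alpha0\to0)=\max_{\beta,\gamma\in\mathbb{Z}_2^n}\mathrm{adp}^{\oplus}(\alpha0,\beta\to\gamma).$$
   Context: For $x\in\mathbb{Z}_2^n$, $x=(x_0,\dots,x_{n-1})$ is identified with the integer $\sum_i x_i2^{n-1-i}$ ($x_0$ most significant); $+$ is addition modulo $2^n$, $\oplus$ is bitwise XOR, $x\lll r=(x_r,\dots,x_{n-1},x_0,\dots,x_{r-1})$. For $f:(\mathbb{Z}_2^n)^2\to\mathbb{Z}_2^n$, $\mathrm{adp}^f(\alpha,\beta\to\gamma)=4^{-n}\#\{(x,y): f(x+\alpha,y+\beta)=f(x,y)+\gamma\}$. $\mathrm{adp}^{\oplus}$ is this for $f(x,y)=x\oplus y$, and $\mathrm{adp}^{\mathrm{XR}}_r$ for $f(x,y)=(x\oplus y)\lll r$. *)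

From mathcomp Require Import all_boot all_order all_algebra.
Set Implicit Arguments. Unset Strict Implicit. Unset Printing Implicit Defensive.
Import Order.TTheory GRing.Theory Num.Theory.

(* Z_2^n : bit vectors x = (x_0, ..., x_{n-1}), x_0 most significant. *)
Definition bv (n : nat) := {ffun 'I_n -> bool}.

Definition toNat n (x : bv n) : nat := \sum_(i < n) (x i : nat) * 2 ^ (n.-1 - i).

Definition ofNat n (m : nat) : bv n := [ffun i : 'I_n => odd (m %/ 2 ^ (n.-1 - i))].

Definition addm n (x y : bv n) : bv n := ofNat n ((toNat x + toNat y) %% 2 ^ n).

Definition bxor n (x y : bv n) : bv n := [ffun i => x i (+) y i].

Definition rotl n (x : bv n) (r : nat) : bv n :=
  [ffun i : 'I_n => x (insubd i ((i + r) %% n))].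

Definition adp n (f : bv n -> bv n -> bv n) (a b c : bv n) : rat :=
  (#|[set p : bv n * bv n | f (addm p.1 a) (addm p.2 b) == addm (f p.1 p.2) c]|%:R
   / (4 ^ n)%:R)%R.

Definition adp_xor n := adp (@bxor n).
Definition adp_XR n (r : nat) := adp (fun x y : bv n => rotl (bxor x y) r).

(* alpha0 = (alpha_0, ..., alpha_{n-2}, 0) for alpha in Z_2^{n-1} *)
Definition ext0 n (a : bv n.-1) : bv n :=
  [ffun i : 'I_n => oapp a false (insub (val i) : option 'I_n.-1)].

Definition zero_bv n : bv n := [ffun => false].

Definition is_max_of (T : Type) (g : T -> rat) (v : rat) : Prop :=
  (exists t, g t = v) /\ (forall t, (g t <= v)%R).

(** Identify [bv n] with the integers below [2^n] and count the solutions
    [(x, y)] of the differential equation.  Splitting off the least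
    significant bits [p, q] of [x, y] turns an equation modulo [2^(n+1)] into
    its parity condition and an equation modulo [2^n] whose differences
    absorb the carries, so the XOR count satisfies
    [N(a, b, g) = [a + b + g even] * sum_(p, q) N(carries)].  Induction then
    gives [N(a, b, g) <= N(a, a, 0)]: when [a] is odd the two values of [q]
    lead to differences of opposite parities, and one of the two counts
    vanishes.  Rotating left by [n - 1] rotates right by one bit, so for
    even [a] forgetting the (rotated) low output bit bounds the XR count by
    [4 * N(a/2, a/2, 0) = N(a, a, 0)]; at [(a, a, 0)] the rotation is a
    bijection applied to both sides and can be dropped. *)

From mathcomp Require Import all_boot all_order all_algebra.
From mathcomp Require Import zify.
Set Implicit Arguments. Unset Strict Implicit. Unset Printing Implicit Defensive.
Import GRing.Theory Num.Theory.

Definition bv_init n (x : bv n.+1) : bv n :=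
  [ffun i : 'I_n => x (widen_ord (leqnSn n) i)].
Definition bv_last n (x : bv n.+1) : bool := x ord_max.

Lemma toNat_init_last n (x : bv n.+1) :
  toNat x = bv_last x + (toNat (bv_init x)).*2.
Proof.
rewrite /toNat big_ord_recr /= subnn expn0 muln1 addnC; congr (_ + _).
rewrite -mul2n big_distrr /=; apply: eq_bigr => i _; rewrite ffunE.
have -> : n - i = (n.-1 - i).+1 by have := ltn_ord i; lia.
by rewrite expnS mulnCA.
Qed.

Lemma toNat_head_tail n (x : bv n.+1) :
  toNat x = x ord0 * 2 ^ n + toNat [ffun i : 'I_n => x (lift ord0 i)].
Proof.
rewrite /toNat big_ord_recl /= subn0; congr (_ + _); apply: eq_bigr => i _.
rewrite ffunE; congr (_ * 2 ^ _); rewrite /bump /=; have := ltn_ord i; lia.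
Qed.

Lemma bv_init_ofNat n m : bv_init (ofNat n.+1 m) = ofNat n m./2.
Proof.
apply/ffunP => i; rewrite !ffunE /=.
have -> : n - i = (n.-1 - i).+1 by have := ltn_ord i; lia.
by rewrite -divn2 -divnMA -expnS.
Qed.

Lemma bv_last_ofNat n m : bv_last (ofNat n.+1 m) = odd m.
Proof. by rewrite /bv_last ffunE /= subnn expn0 divn1. Qed.

Lemma bv_init_last_inj n (x y : bv n.+1) :
  bv_init x = bv_init y -> bv_last x = bv_last y -> x = y.
Proof.
move=> /ffunP eq_init eq_last; apply/ffunP => i; case: (ltnP i n) => [lt_in|le_ni].
  have := eq_init (Ordinal lt_in); rewrite !ffunE.
  by have -> : widen_ord (leqnSn n) (Ordinal lt_in) = i by apply: val_inj.
have -> // : i = ord_max.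
by apply: val_inj; have := ltn_ord i; rewrite /=; lia.
Qed.

Lemma modn_bit_double (b : bool) q d :
  0 < d -> (b + q.*2) %% (2 * d) = b + (q %% d).*2.
Proof.
move=> d_gt0.
have -> : b + q.*2 = q %/ d * (2 * d) + (b + (q %% d).*2).
  by rewrite {1}(divn_eq q d) -!mul2n; lia.
rewrite modnMDl modn_small //.
by have := ltn_pmod q d_gt0; case: b => /=; rewrite -mul2n; lia.
Qed.

Lemma toNat_ofNat n m : toNat (ofNat n m) = m %% 2 ^ n.
Proof.
elim: n m => [|n IHn] m; first by rewrite /toNat big_ord0 expn0 modn1.
rewrite toNat_init_last bv_init_ofNat bv_last_ofNat IHn.
by rewrite -{3}(odd_double_half m) expnS modn_bit_double // expn_gt0.
Qed.

Lemma ofNat_toNat n (x : bv n) : ofNat n (toNat x) = x.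
Proof.
elim: n x => [|n IHn] x; first by apply/ffunP => -[].
apply: bv_init_last_inj.
  by rewrite bv_init_ofNat toNat_init_last half_bit_double IHn.
by rewrite bv_last_ofNat toNat_init_last oddD odd_double addbF oddb.
Qed.

Lemma toNat_lt n (x : bv n) : toNat x < 2 ^ n.
Proof. by rewrite -{1}(ofNat_toNat x) toNat_ofNat ltn_pmod // expn_gt0. Qed.

Lemma toNat_inj n : injective (@toNat n).
Proof. exact: can_inj (@ofNat_toNat n). Qed.

Lemma toNat_addm n (x y : bv n) : toNat (addm x y) = (toNat x + toNat y) %% 2 ^ n.
Proof. by rewrite /addm toNat_ofNat modn_mod. Qed.

Lemma toNat_zero n : toNat (zero_bv n) = 0.
Proof. by rewrite /toNat big1 // => i _; rewrite ffunE. Qed.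

Lemma toNat_ext0 n (a : bv n) : toNat (@ext0 n.+1 a) = (toNat a).*2.
Proof.
rewrite toNat_init_last /bv_last ffunE insubF /= ?ltnn // add0n.
by congr (toNat _).*2; apply/ffunP => i; rewrite !ffunE /= valK.
Qed.

Lemma sum_bv_toNat n (G : nat -> nat) :
  \sum_(x < 2 ^ n) G x = \sum_(u : bv n) G (toNat u).
Proof.
rewrite (reindex (fun u : bv n => Ordinal (toNat_lt u))) //=.
exists (fun i : 'I_(2 ^ n) => ofNat n i) => [u _|i _]; first by rewrite ofNat_toNat.
by apply: val_inj; rewrite /= toNat_ofNat modn_small.
Qed.

Lemma eq_bit_double (s t : bool) m k : (s + m.*2 == t + k.*2) = (s == t) && (m == k).
Proof.
apply/eqP/andP => [eq_st | [/eqP -> /eqP -> //]].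
have odd_eq := congr1 odd eq_st; rewrite !oddD !odd_double !addbF !oddb in odd_eq.
split; first exact/eqP.
by move: eq_st; rewrite odd_eq => /addnI/double_inj ->.
Qed.

(* [carry_half p a = (p + a)./2]: what remains of the difference [a] for the
   high bits once the low bit [p] has absorbed [odd a]. *)
Definition carry_half (p : bool) a := a./2 + (p && odd a).

Lemma bit_double_addmod n (p : bool) x a :
  (p + x.*2 + a) %% 2 ^ n.+1 = (p (+) odd a) + ((x + carry_half p a) %% 2 ^ n).*2.
Proof.
rewrite expnS -modn_bit_double ?expn_gt0 //; congr (_ %% _).
rewrite /carry_half -{1}(odd_double_half a).
by case: p; case: (odd a) => /=; rewrite -!mul2n; lia.
Qed.

Definition xorn n u v := toNat (bxor (ofNat n u) (ofNat n v)).

Lemma toNat_bxor n (u v : bv n) : toNat (bxor u v) = xorn n (toNat u) (toNat v).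
Proof. by rewrite /xorn !ofNat_toNat. Qed.

Lemma xorn_bit_double n (p q : bool) u v :
  xorn n.+1 (p + u.*2) (q + v.*2) = (p (+) q) + (xorn n u v).*2.
Proof.
have init_bxor (x y : bv n.+1) : bv_init (bxor x y) = bxor (bv_init x) (bv_init y).
  by apply/ffunP => i; rewrite !ffunE.
have last_bxor (x y : bv n.+1) : bv_last (bxor x y) = bv_last x (+) bv_last y.
  by rewrite /bv_last ffunE.
rewrite /xorn toNat_init_last init_bxor last_bxor.
rewrite !bv_init_ofNat !bv_last_ofNat !half_bit_double.
by rewrite !oddD !odd_double !addbF !oddb.
Qed.

Definition rotr1n n w := w./2 + odd w * 2 ^ n.-1.

Lemma toNat_rotl_pred n (x : bv n.+1) : toNat (rotl x n) = rotr1n n.+1 (toNat x).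
Proof.
rewrite toNat_head_tail /rotr1n /= toNat_init_last half_bit_double.
rewrite oddD odd_double addbF oddb addnC; congr (_ + _ * _).
  congr toNat; apply/ffunP => i; rewrite !ffunE; congr (x _); apply: val_inj.
  rewrite val_insubd /= ltn_mod /bump /= add1n addSnnS addnC modnDl modn_small //.
  by have := ltn_ord i; lia.
rewrite ffunE /bv_last; congr (x _); apply: val_inj.
by rewrite val_insubd /= add0n modn_small // ltnSn.
Qed.

Lemma rotr1n_bit_double n (s : bool) k : rotr1n n.+1 (s + k.*2) = k + s * 2 ^ n.
Proof. by rewrite /rotr1n /= half_bit_double oddD odd_double addbF oddb. Qed.

Lemma rotr1n_lt n w : w < 2 ^ n.+1 -> rotr1n n.+1 w < 2 ^ n.+1.
Proof.
rewrite -(odd_double_half w) rotr1n_bit_double expnS.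
by case: (odd w); rewrite -!mul2n; lia.
Qed.

Lemma rotr1n_inj n : {in gtn (2 ^ n.+1) &, injective (rotr1n n.+1)}.
Proof.
move=> w1 w2; rewrite !inE expnS => lt_w1 lt_w2.
rewrite -(odd_double_half w1) -(odd_double_half w2) in lt_w1 lt_w2 *.
rewrite !rotr1n_bit_double.
by case: (odd w1); case: (odd w2); rewrite -!mul2n; lia.
Qed.

Definition adp_sol n (F : nat -> nat -> nat) a b g x y : bool :=
  F ((x + a) %% 2 ^ n) ((y + b) %% 2 ^ n) == (F x y + g) %% 2 ^ n.

Definition adp_count n F a b g :=
  \sum_(x < 2 ^ n) \sum_(y < 2 ^ n) (adp_sol n F a b g x y : nat).

Lemma adpE n (f : bv n -> bv n -> bv n) F a b c :
    (forall u v, toNat (f u v) = F (toNat u) (toNat v)) ->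
  adp f a b c = ((adp_count n F (toNat a) (toNat b) (toNat c))%:R / (4 ^ n)%:R)%R.
Proof.
move=> toNat_f; congr (_%:R / _)%R.
rewrite /adp_count; set sol := adp_sol n F _ _ _.
rewrite (sum_bv_toNat n (fun x => \sum_(y < 2 ^ n) (sol x y : nat))).
under eq_bigr => u _ do rewrite (sum_bv_toNat n (fun y => (sol (toNat u) y : nat))).
rewrite pair_bigA -sum1_card big_mkcond /=; apply: eq_bigr => -[u v] _ /=.
rewrite inE /= /sol /adp_sol -(inj_eq (@toNat_inj n)) toNat_f !toNat_addm toNat_f.
by case: (_ == _).
Qed.

Lemma sum_bit_double n (G : nat -> nat) :
  \sum_(x < 2 ^ n.+1) G x = \sum_(p : bool) \sum_(x < 2 ^ n) G (p + x.*2).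
Proof.
rewrite big_bool /= -big_split /= expnS mul2n.
elim: (2 ^ n) => [|m IHm]; first by rewrite !big_ord0.
by rewrite doubleS !big_ord_recr /= IHm -!addnA add1n add0n [_ + G m.*2]addnC.
Qed.

Lemma sum2_bit_double n (G : nat -> nat -> nat) :
  \sum_(x < 2 ^ n.+1) \sum_(y < 2 ^ n.+1) G x y =
  \sum_(p : bool) \sum_(q : bool) \sum_(x < 2 ^ n) \sum_(y < 2 ^ n)
     G (p + x.*2) (q + y.*2).
Proof.
rewrite (sum_bit_double n (fun x => \sum_(y < 2 ^ n.+1) G x y)).
apply: eq_bigr => p _.
under eq_bigr => x _ do rewrite (sum_bit_double n (G (p + x.*2))).
exact: exchange_big.
Qed.

Lemma adp_count_inj_comp n F (G : nat -> nat) a b :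
    (forall u v, F u v < 2 ^ n) -> (forall w, w < 2 ^ n -> G w < 2 ^ n) ->
    {in gtn (2 ^ n) &, injective G} ->
  adp_count n (fun u v => G (F u v)) a b 0 = adp_count n F a b 0.
Proof.
move=> F_lt G_lt G_inj; apply: eq_bigr => x _; apply: eq_bigr => y _.
rewrite /adp_sol !addn0 (modn_small (G_lt _ (F_lt x y))) (modn_small (F_lt x y)).
by rewrite (inj_in_eq G_inj) // inE ?G_lt.
Qed.

Definition xor_count n := adp_count n (xorn n).

Lemma xor_sol_step n a b g (p q : bool) x y :
  adp_sol n.+1 (xorn n.+1) a b g (p + x.*2) (q + y.*2) =
  ~~ (odd a (+) odd b (+) odd g) &&
  adp_sol n (xorn n) (carry_half p a) (carry_half q b) (carry_half (p (+) q) g) x y.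
Proof.
rewrite /adp_sol !bit_double_addmod !xorn_bit_double bit_double_addmod.
rewrite eq_bit_double !addnA; congr (_ && _).
by case: p; case: q; case: (odd a); case: (odd b); case: (odd g).
Qed.

Lemma xor_count_step n a b g :
  xor_count n.+1 a b g =
  ~~ (odd a (+) odd b (+) odd g) *
  \sum_(p : bool) \sum_(q : bool)
     xor_count n (carry_half p a) (carry_half q b) (carry_half (p (+) q) g).
Proof.
rewrite /xor_count /adp_count (sum2_bit_double n (adp_sol n.+1 _ a b g)).
rewrite big_distrr; apply: eq_bigr => p _; rewrite big_distrr; apply: eq_bigr => q _.
rewrite big_distrr; apply: eq_bigr => x _; rewrite big_distrr; apply: eq_bigr => y _.
by rewrite xor_sol_step; case: (~~ _); rewrite /= ?mul1n ?mul0n.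
Qed.

Lemma xor_count0 a b g : xor_count 0 a b g = 1.
Proof.
by rewrite /xor_count /adp_count expn0 !big_ord1 /adp_sol /xorn /toNat !big_ord0 modn1.
Qed.

Lemma xor_count_odd n a b g : odd a (+) odd b (+) odd g -> xor_count n.+1 a b g = 0.
Proof. by rewrite xor_count_step => ->. Qed.

Lemma carry_half0 p : carry_half p 0 = 0.
Proof. by rewrite /carry_half andbF. Qed.

Lemma xor_count_le_diag n a b g : xor_count n a b g <= xor_count n a a 0.
Proof.
case: n => [|n]; first by rewrite !xor_count0.
elim: n a b g => [|n IHn] a b g.
  rewrite !xor_count_step addbb /= mul1n.
  by case: (~~ _); rewrite ?mul0n // mul1n !big_bool /= !xor_count0.
have pair_le A B G B' G' : odd B (+) odd G != odd B' (+) odd G' ->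
    xor_count n.+1 A B G + xor_count n.+1 A B' G' <= xor_count n.+1 A A 0.
  case odd_BG: (odd A (+) odd B (+) odd G) => parity.
    by rewrite xor_count_odd // add0n IHn.
  rewrite (@xor_count_odd _ A B') ?addn0 ?IHn //.
  move: odd_BG parity.
  by case: (odd A); case: (odd B); case: (odd G); case: (odd B'); case: (odd G').
rewrite [leqRHS]xor_count_step addbb /= mul1n xor_count_step.
case parity: (~~ _); rewrite ?mul0n // mul1n.
apply: leq_sum => p _; under [leqRHS]eq_bigr do rewrite carry_half0.
case odd_a: (odd a).
  apply: (@leq_trans (xor_count n.+1 (carry_half p a) (carry_half p a) 0)).
    rewrite big_bool; apply: pair_le.
    move: parity; rewrite /carry_half !oddD odd_a.
    by case: p; case: (odd b); case: (odd g); case: (odd b./2); case: (odd g./2).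
  by rewrite big_bool; case: p; rewrite ?leq_addr ?leq_addl.
apply: leq_sum => q _.
by rewrite /carry_half !odd_a !andbF IHn.
Qed.

Lemma xor_count_even_diag n a :
  ~~ odd a -> xor_count n.+1 a a 0 = 4 * xor_count n a./2 a./2 0.
Proof.
move=> even_a; rewrite xor_count_step addbb /= mul1n !big_bool /carry_half.
by rewrite (negbTE even_a) /= !addn0; lia.
Qed.

Definition rotxorn n u v := rotr1n n (xorn n u v).
Definition rot_count n := adp_count n (rotxorn n).

(* The rotated high bit vanishes modulo [2^n], and since [a] is even the
   difference [a] carries nothing out of the low bit of [x]. *)
Lemma rot_sol_step n a b g (p q : bool) x y : ~~ odd a ->
  adp_sol n.+1 (rotxorn n.+1) a b g (p + x.*2) (q + y.*2) ->
  adp_sol n (xorn n) a./2 (carry_half q b) g x y.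
Proof.
move=> even_a; rewrite /adp_sol /rotxorn !bit_double_addmod !xorn_bit_double.
rewrite !rotr1n_bit_double {1}/carry_half (negbTE even_a) andbF addn0.
move=> /eqP/(congr1 (modn^~ (2 ^ n))) /=.
rewrite modn_dvdm ?expnS ?dvdn_mull //.
rewrite [X in X %% _ = _]addnC modnMDl modn_small ?toNat_lt // => ->.
by rewrite addnAC [(_ + g) + _]addnC modnMDl.
Qed.

Lemma rot_count_le_sum n a b g : ~~ odd a ->
  rot_count n.+1 a b g <=
  \sum_(p : bool) \sum_(q : bool) xor_count n a./2 (carry_half q b) g.
Proof.
move=> even_a; rewrite /rot_count /adp_count (sum2_bit_double n (adp_sol n.+1 _ a b g)).
apply: leq_sum => p _; apply: leq_sum => q _.
apply: leq_sum => x _; apply: leq_sum => y _.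
by case: (adp_sol _ _ _ _ _ _ _) (@rot_sol_step n a b g p q x y even_a) => // ->.
Qed.

Lemma rot_count_le_diag n a b g : ~~ odd a -> rot_count n.+1 a b g <= xor_count n.+1 a a 0.
Proof.
move=> even_a; apply: (leq_trans (rot_count_le_sum n b g even_a)).
rewrite xor_count_even_diag // !big_bool /=.
have := xor_count_le_diag n a./2 (carry_half true b) g.
have := xor_count_le_diag n a./2 (carry_half false b) g.
lia.
Qed.

Lemma rot_count_diag n a b : rot_count n.+1 a b 0 = xor_count n.+1 a b 0.
Proof.
apply: adp_count_inj_comp; [|exact: rotr1n_lt|exact: rotr1n_inj].
by move=> u v; exact: toNat_lt.
Qed.

Lemma is_max_of_count (T : Type) (f : T -> rat) (k : T -> nat) (m d : nat) :
    (forall t, f t = ((k t)%:R / d%:R)%R) ->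
    (exists t, k t = m) -> (forall t, k t <= m) ->
  is_max_of f (m%:R / d%:R)%R.
Proof.
move=> fE [t0 kt0] le_km; split; first by exists t0; rewrite fE kt0.
by move=> t; rewrite fE ler_wpM2r ?invr_ge0 ?ler0n ?ler_nat.
Qed.

Theorem corollary4 (n : nat) (Hn : 2 <= n) (alpha : bv n.-1) :
  is_max_of (fun bc : bv n * bv n => adp_XR n.-1 (ext0 alpha) bc.1 bc.2)
            (adp_xor (ext0 alpha) (ext0 alpha) (zero_bv n)) /\
  is_max_of (fun bc : bv n * bv n => adp_xor (ext0 alpha) bc.1 bc.2)
            (adp_xor (ext0 alpha) (ext0 alpha) (zero_bv n)).
Proof.
case: n Hn alpha => [|[|m]] // _ alpha.
set A := ext0 alpha; have even_A : ~~ odd (toNat A) by rewrite toNat_ext0 odd_double.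
have adp_xorE b c : adp_xor A b c =
    ((xor_count m.+2 (toNat A) (toNat b) (toNat c))%:R / (4 ^ m.+2)%:R)%R.
  exact/adpE/toNat_bxor.
have adp_XRE b c : adp_XR m.+1 A b c =
    ((rot_count m.+2 (toNat A) (toNat b) (toNat c))%:R / (4 ^ m.+2)%:R)%R.
  by apply: adpE => u v; rewrite toNat_rotl_pred toNat_bxor.
rewrite adp_xorE toNat_zero; split.
  apply: (is_max_of_count (k := fun bc => rot_count m.+2 (toNat A) (toNat bc.1) (toNat bc.2))).
  - by move=> [b c]; exact: adp_XRE.
  - by exists (A, zero_bv _); rewrite /= toNat_zero rot_count_diag.
  - by move=> [b c]; exact: rot_count_le_diag.
apply: (is_max_of_count (k := fun bc => xor_count m.+2 (toNat A) (toNat bc.1) (toNat bc.2))).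
- by move=> [b c]; exact: adp_xorE.
- by exists (A, zero_bv _); rewrite /= toNat_zero.
- by move=> [b c]; exact: xor_count_le_diag.
Qed.
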